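(* Let $m>0$, $\delta>0$, and $\varphi_{\mathrm{lead}}(M)=-\frac{16\pi^2}{\log\left(\frac{M\delta}{4m^2}\right)^2+\pi^2}$ for $M\ge4m^2$. For $t>0$ and $\mathbf p\in\mathbb{R}^3$ define the (improper) integral $$C(t,\mathbf p)=-\lim_{R\to\infty}\int_{4m^2}^R\varphi_{\mathrm{lead}}(M)\frac{\sin(\omega_Mt)}{\omega_M}dM,\qquad\omega_M=\sqrt{|\mathbf p|^2+M}.$$ Then there is a constant $C_0>0$ independent of $\mathbf p$ such that $|C(t,\mathbf p)|\le C_0/t$ for all $t>0$, and $t\mapsto C(t,\mathbf p)$ is integrable near $t=0$ with $\sup_{\mathbf p\in\mathbb{R}^3}\int_0^{\tau}|C(t,\mathbf p)|dt<\infty$ for some $\tau>0$. *)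

From Stdlib Require Import Reals.
From Coquelicot Require Import Coquelicot.
Open Scope R_scope.

Definition pnorm2 (p : R * R * R) : R :=
  let '(p1, p2, p3) := p in p1 ^ 2 + p2 ^ 2 + p3 ^ 2.

Definition phi_lead (m delta M : R) : R :=
  - (16 * PI ^ 2) / ((ln (M * delta / (4 * m ^ 2))) ^ 2 + PI ^ 2).

Definition omega (p : R * R * R) (M : R) : R := sqrt (pnorm2 p + M).

Definition C_integrand (m delta t : R) (p : R * R * R) (M : R) : R :=
  phi_lead m delta M * sin (omega p M * t) / omega p M.

Definition C_partial (m delta t : R) (p : R * R * R) (Rup : R) : R :=
  RInt (C_integrand m delta t p) (4 * m ^ 2) Rup.

Definition C_fun (m delta t : R) (p : R * R * R) : R :=
  - real (Lim (C_partial m delta t p) p_infty).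

(* Since sin(omega_M t) / omega_M = -(2/t) d/dM cos(omega_M t), integrating by parts turns
   the M-integral over [A, B] into (2/t) times boundary terms bounded by |phi_lead| plus an
   integral of |phi_lead'|.  As |phi_lead'| is dominated by the derivative of
   32 pi^2 atan(log(M delta / 4m^2)), every partial integral is O(1/t) uniformly in p; once the
   logarithm is nonnegative phi_lead is monotone, so the tail beyond A is at most
   (6/t) |phi_lead(A)|, which tends to 0 and gives the limit.  For t <= delta / 4m^2, splitting
   the integral where omega_M has grown by 1/sqrt t bounds |C(t,p)| by
   32/sqrt t + (6/t) 16 pi^2 / (log(delta / 4m^2 t)^2 + pi^2), a function with an explicit
   antiderivative bounded near 0.  Finally C is continuous in t, so its improper integral on
   (0, delta / 4m^2] exists and is bounded independently of p. *)

From Stdlib Require Import Reals Lra Psatz.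
From Coquelicot Require Import Coquelicot.
Open Scope R_scope.

Lemma ex_RInt_continuous_R (f : R -> R) a b :
  (forall x, Rmin a b <= x <= Rmax a b -> continuous f x) -> ex_RInt f a b.
Proof. exact (ex_RInt_continuous (V := R_CompleteNormedModule) f a b). Qed.

Lemma ex_RInt_continuous_pos (f : R -> R) a b : 0 < a -> 0 < b ->
  (forall x, 0 < x -> continuous f x) -> ex_RInt f a b.
Proof.
  intros Ha Hb Hf. apply ex_RInt_continuous_R. intros x Hx. apply Hf.
  pose proof (Rmin_glb_lt a b 0 Ha Hb). lra.
Qed.

Lemma RInt_correct_R (f : R -> R) a b : ex_RInt f a b -> is_RInt f a b (RInt f a b).
Proof. exact (RInt_correct (V := R_CompleteNormedModule) f a b). Qed.

Lemma RInt_Chasles_R (f : R -> R) a b c : ex_RInt f a b -> ex_RInt f b c ->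
  RInt f a b + RInt f b c = RInt f a c.
Proof. exact (RInt_Chasles (V := R_CompleteNormedModule) f a b c). Qed.

Lemma RInt_minus_R (f g : R -> R) a b : ex_RInt f a b -> ex_RInt g a b ->
  RInt (fun x => f x - g x) a b = RInt f a b - RInt g a b.
Proof. exact (RInt_minus (V := R_CompleteNormedModule) f g a b). Qed.

Lemma RInt_scal_R (f : R -> R) a b k : ex_RInt f a b ->
  RInt (fun x => k * f x) a b = k * RInt f a b.
Proof. exact (RInt_scal (V := R_CompleteNormedModule) f a b k). Qed.

Lemma ex_RInt_scal_R (f : R -> R) a b k : ex_RInt f a b -> ex_RInt (fun x => k * f x) a b.
Proof. exact (ex_RInt_scal (V := R_NormedModule) f a b k). Qed.

Lemma ex_RInt_minus_R (f g : R -> R) a b : ex_RInt f a b -> ex_RInt g a b ->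
  ex_RInt (fun x => f x - g x) a b.
Proof. exact (ex_RInt_minus (V := R_NormedModule) f g a b). Qed.

Lemma RInt_derive_R (f df : R -> R) a b :
  (forall x, Rmin a b <= x <= Rmax a b -> is_derive f x (df x)) ->
  (forall x, Rmin a b <= x <= Rmax a b -> continuous df x) ->
  RInt df a b = f b - f a.
Proof.
  intros Hf Hdf. apply (is_RInt_unique (V := R_CompleteNormedModule)).
  exact (is_RInt_derive (V := R_CompleteNormedModule) f df a b Hf Hdf).
Qed.

Lemma Rabs_RInt_le_primitive (f g G : R -> R) a b : a <= b ->
  (forall x, a <= x <= b -> continuous f x) ->
  (forall x, a <= x <= b -> Rabs (f x) <= g x) ->
  (forall x, a <= x <= b -> is_derive G x (g x)) ->
  (forall x, a <= x <= b -> continuous g x) ->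
  Rabs (RInt f a b) <= G b - G a.
Proof.
  intros Hab Hf Hfg HG Hg.
  assert (exf : ex_RInt f a b)
    by (apply ex_RInt_continuous_R; rewrite Rmin_left, Rmax_right; auto).
  rewrite <- (RInt_derive_R G g a b); rewrite ?Rmin_left, ?Rmax_right; auto.
  apply Rle_trans with (RInt (fun x => Rabs (f x)) a b); [now apply abs_RInt_le|].
  apply RInt_le; auto.
  - apply ex_RInt_continuous_R. rewrite Rmin_left, Rmax_right by exact Hab.
    intros x Hx. apply continuous_Rabs_comp, Hf, Hx.
  - apply ex_RInt_continuous_R. rewrite Rmin_left, Rmax_right by exact Hab. exact Hg.
  - intros x Hx. apply Hfg. lra.
Qed.

Lemma Rabs_sin_sub_le x y : Rabs (sin x - sin y) <= Rabs (x - y).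
Proof.
  destruct (MVT_abs sin cos y x) as [c [Hc _]].
  { intros c _. apply derivable_pt_lim_sin. }
  rewrite Hc. rewrite <- (Rmult_1_l (Rabs (x - y))) at 2.
  apply Rmult_le_compat_r; [apply Rabs_pos | apply Rabs_le, COS_bound].
Qed.

Lemma is_lim_Rabs_sub_le (g : R -> R) (l y K : R) :
  is_lim g p_infty l -> Rbar_locally p_infty (fun v => Rabs (g v - y) <= K) ->
  Rabs (l - y) <= K.
Proof.
  intros Hl Hb. apply Rabs_le_between'.
  assert (Hlow : Rbar_le (y - K) l).
  { apply (is_lim_le_loc (fun _ => y - K) g p_infty); [|apply is_lim_const | exact Hl].
    revert Hb. apply filter_imp. intros v Hv. apply Rabs_le_between' in Hv. lra. }
  assert (Hup : Rbar_le l (y + K)).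
  { apply (is_lim_le_loc g (fun _ => y + K) p_infty); [|exact Hl | apply is_lim_const].
    revert Hb. apply filter_imp. intros v Hv. apply Rabs_le_between' in Hv. lra. }
  simpl in Hlow, Hup. lra.
Qed.

Lemma RInt_le_RInt_lower (g : R -> R) x y b : x <= y <= b -> ex_RInt g x b ->
  (forall z, x < z < y -> 0 <= g z) -> RInt g y b <= RInt g x b.
Proof.
  intros Hxyb Hxb Hg.
  assert (Hxy : ex_RInt g x y) by (apply (ex_RInt_Chasles_1 g x y b); auto).
  assert (Hyb : ex_RInt g y b) by (apply (ex_RInt_Chasles_2 g x y b); auto).
  rewrite <- (RInt_Chasles_R g x y b) by auto.
  assert (0 <= RInt g x y) by (apply RInt_ge_0; auto; lra). lra.
Qed.

Lemma is_RInt_gen_at_right_le (g : R -> R) (a b K : R) : a < b ->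
  (forall x, a < x <= b -> ex_RInt g x b) ->
  (forall x, a < x < b -> 0 <= g x) ->
  (forall x, a < x <= b -> RInt g x b <= K) ->
  exists I, is_RInt_gen g (at_right a) (at_point b) I /\ I <= K.
Proof.
  intros Hab Hex Hg HK.
  set (E := fun y => exists x, a < x <= b /\ y = RInt g x b).
  destruct (completeness E) as [I [Hub Hlub]].
  { exists K. intros y [x [Hx ->]]. auto. }
  { exists (RInt g b b), b. split; [lra | reflexivity]. }
  exists I. split; [|apply Hlub; intros y [x [Hx ->]]; auto].
  apply (filterlimi_lim_ext_loc (fun xy => RInt g (fst xy) (snd xy))).
  { apply (Filter_prod _ _ _ (fun x => a < x <= b) (fun y => y = b)); [|reflexivity|].
    - exists (mkposreal _ (proj2 (Rlt_0_minus a b) Hab)). intros x Hx Hax. split; auto.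
      apply Rabs_lt_between' in Hx. simpl in Hx. lra.
    - intros x y Hx ->. apply RInt_correct_R, Hex, Hx. }
  apply filterlim_locally. intros [eps Heps].
  assert (Hnear : exists x1, a < x1 <= b /\ I - eps < RInt g x1 b).
  { apply Classical_Pred_Type.not_all_not_ex. intros Hnone.
    assert (I <= I - eps); [|lra].
    apply Hlub. intros y [x [Hx ->]].
    apply Rnot_lt_le. intros Hlt. apply (Hnone x). auto. }
  destruct Hnear as [x1 [Hx1 Hgt]].
  apply (Filter_prod _ _ _ (fun x => a < x < x1) (fun y => y = b)); [|reflexivity|].
  - exists (mkposreal _ (proj2 (Rlt_0_minus a x1) (proj1 Hx1))). intros x Hx Hax. split; auto.
    apply Rabs_lt_between' in Hx. simpl in Hx. lra.
  - intros x y Hx ->. simpl. apply Rabs_lt_between'.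
    assert (RInt g x b <= I) by (apply Hub; exists x; split; [lra | reflexivity]).
    assert (RInt g x1 b <= RInt g x b).
    { apply RInt_le_RInt_lower; [lra | apply Hex; lra | intros z Hz; apply Hg; lra]. }
    lra.
Qed.

Lemma PI_gt_3 : 3 < PI.
Proof. pose proof PI2_3_2. lra. Qed.

Lemma pnorm2_ge_0 p : 0 <= pnorm2 p.
Proof. destruct p as [[a b] c]; simpl; nra. Qed.

Lemma omega_pos p M : 0 < M -> 0 < omega p M.
Proof. intros. apply sqrt_lt_R0. pose proof (pnorm2_ge_0 p); lra. Qed.

Lemma omega_add_exists p A d : 0 < A -> 0 < d ->
  exists M, A + d ^ 2 <= M /\ omega p M = omega p A + d.
Proof.
  intros HA Hd. pose proof (pnorm2_ge_0 p). pose proof (omega_pos p A HA).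
  assert (Hsq : omega p A * omega p A = pnorm2 p + A) by (apply sqrt_sqrt; lra).
  exists ((omega p A + d) ^ 2 - pnorm2 p). split; [nra|].
  unfold omega at 1. replace (pnorm2 p + _) with ((omega p A + d) ^ 2) by ring.
  apply sqrt_pow2. lra.
Qed.

Ltac derive_side_conditions := repeat match goal with
  | |- _ /\ _ => split
  | |- True => exact I
  | |- 0 < _ * _ * / _ => apply Rmult_lt_0_compat; [nra | apply Rinv_0_lt_compat; nra]
  | |- 0 < _ * _ / _ => apply Rdiv_lt_0_compat; nra
  | |- _ * _ <> 0 => apply Rmult_integral_contrapositive_currified
  | |- _ => nra
  end.

Definition lead_profile (x : R) := 16 * PI ^ 2 / (x ^ 2 + PI ^ 2).

Lemma lead_profile_pos x : 0 < lead_profile x.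
Proof. pose proof PI_RGT_0. apply Rdiv_lt_0_compat; nra. Qed.

Lemma lead_profile_le_16 x : lead_profile x <= 16.
Proof.
  pose proof PI_RGT_0. unfold lead_profile.
  apply Rmult_le_reg_r with (x ^ 2 + PI ^ 2); [nra|].
  unfold Rdiv. rewrite Rmult_assoc, Rinv_l by nra. nra.
Qed.

Lemma lead_profile_le_antimono x y : 0 <= x <= y -> lead_profile y <= lead_profile x.
Proof.
  intros Hxy. pose proof PI_RGT_0. unfold lead_profile. apply Rmult_le_compat_l; [nra|].
  apply Rinv_le_contravar; nra.
Qed.

Lemma lead_profile_le_inv x : 0 < x -> lead_profile x <= 16 * PI ^ 2 / x.
Proof.
  intros Hx. pose proof PI_gt_3. unfold lead_profile. apply Rmult_le_compat_l; [nra|].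
  pose proof (pow2_ge_0 (x - 1 / 2)). apply Rinv_le_contravar; [exact Hx | nra].
Qed.

Section LeadingTerm.

Variables m delta : R.
Hypothesis Hm : 0 < m.
Hypothesis Hdelta : 0 < delta.

Definition lead_log M := ln (M * delta / (4 * m ^ 2)).

Definition dphi_lead M :=
  32 * PI ^ 2 * lead_log M / (M * (lead_log M ^ 2 + PI ^ 2) ^ 2).

Lemma lead_log_le A B : 0 < A -> A <= B -> lead_log A <= lead_log B.
Proof.
  intros HA HAB. apply ln_le; [apply Rdiv_lt_0_compat; nra |].
  apply Rmult_le_compat_r; [left; apply Rinv_0_lt_compat; nra | nra].
Qed.

Lemma phi_lead_eq M : phi_lead m delta M = - lead_profile (lead_log M).
Proof. unfold phi_lead, lead_profile, lead_log. pose proof PI_RGT_0. field. nra. Qed.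

Lemma Rabs_phi_lead M : Rabs (phi_lead m delta M) = lead_profile (lead_log M).
Proof. rewrite phi_lead_eq, Rabs_Ropp. apply Rabs_right, Rle_ge, Rlt_le, lead_profile_pos. Qed.

Lemma Rabs_phi_lead_le_16 M : Rabs (phi_lead m delta M) <= 16.
Proof. rewrite Rabs_phi_lead. apply lead_profile_le_16. Qed.

Lemma lead_log_arg_eq M : M * delta * / (4 * (m * (m * 1))) = M * delta / (4 * m ^ 2).
Proof. field. lra. Qed.

Lemma is_derive_phi_lead M : 0 < M -> is_derive (phi_lead m delta) M (dphi_lead M).
Proof.
  intros HM. pose proof PI_RGT_0. unfold phi_lead, dphi_lead, lead_log.
  auto_derive; rewrite ?lead_log_arg_eq; [derive_side_conditions|].
  set (L := ln _). field. derive_side_conditions.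
Qed.

Lemma continuous_dphi_lead M : 0 < M -> continuous dphi_lead M.
Proof.
  intros HM. apply (@ex_derive_continuous R_AbsRing R_NormedModule).
  pose proof PI_RGT_0. unfold dphi_lead, lead_log. auto_derive. derive_side_conditions.
Qed.

Definition phi_cos t p M := phi_lead m delta M * cos (omega p M * t).
Definition dphi_cos t p M := dphi_lead M * cos (omega p M * t).

Lemma continuous_C_integrand t p M : 0 < M -> continuous (C_integrand m delta t p) M.
Proof.
  intros HM. apply (@ex_derive_continuous R_AbsRing R_NormedModule).
  pose proof (pnorm2_ge_0 p). pose proof PI_RGT_0. pose proof (omega_pos p M HM).
  unfold C_integrand, phi_lead, omega in *. auto_derive. derive_side_conditions.
Qed.

Lemma continuous_dphi_cos t p M : 0 < M -> continuous (dphi_cos t p) M.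
Proof.
  intros HM. apply (@ex_derive_continuous R_AbsRing R_NormedModule).
  pose proof (pnorm2_ge_0 p). pose proof PI_RGT_0. pose proof (omega_pos p M HM).
  unfold dphi_cos, dphi_lead, lead_log, omega in *. auto_derive. derive_side_conditions.
Qed.

Lemma is_derive_phi_cos t p M : 0 < M ->
  is_derive (phi_cos t p) M (dphi_cos t p M - t / 2 * C_integrand m delta t p M).
Proof.
  intros HM. pose proof (pnorm2_ge_0 p). pose proof PI_RGT_0. pose proof (omega_pos p M HM).
  unfold phi_cos, dphi_cos, C_integrand, phi_lead, dphi_lead, lead_log, omega in *.
  auto_derive; [derive_side_conditions|]. rewrite ?lead_log_arg_eq.
  set (L := ln _). set (s := sqrt _) in *. field. derive_side_conditions.
Qed.

Lemma RInt_C_integrand_by_parts t p A B : 0 < t -> 0 < A -> 0 < B ->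
  RInt (C_integrand m delta t p) A B =
  2 / t * (phi_cos t p A - phi_cos t p B) + 2 / t * RInt (dphi_cos t p) A B.
Proof.
  intros Ht HA HB.
  assert (Hpos : forall x, Rmin A B <= x <= Rmax A B -> 0 < x).
  { intros x Hx. pose proof (Rmin_glb_lt A B 0 HA HB). lra. }
  assert (Hf : ex_RInt (C_integrand m delta t p) A B)
    by (apply ex_RInt_continuous_pos; auto; apply continuous_C_integrand).
  assert (Hg : ex_RInt (dphi_cos t p) A B)
    by (apply ex_RInt_continuous_pos; auto; apply continuous_dphi_cos).
  assert (Hparts : RInt (fun M => dphi_cos t p M - t / 2 * C_integrand m delta t p M) A B
                   = phi_cos t p B - phi_cos t p A).
  { apply RInt_derive_R.
    - intros x Hx. apply is_derive_phi_cos, Hpos, Hx.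
    - intros x Hx. apply (continuous_minus (V := R_NormedModule)).
      + apply continuous_dphi_cos, Hpos, Hx.
      + apply (continuous_scal_r (V := R_NormedModule)), continuous_C_integrand, Hpos, Hx. }
  rewrite RInt_minus_R, RInt_scal_R in Hparts; auto.
  - apply (Rmult_eq_reg_l (t / 2)); [|lra].
    replace (t / 2 * (2 / t * (phi_cos t p A - phi_cos t p B) + 2 / t * RInt (dphi_cos t p) A B))
      with (RInt (dphi_cos t p) A B - (phi_cos t p B - phi_cos t p A)) by (field; lra).
    lra.
  - apply ex_RInt_scal_R, Hf.
Qed.

Definition atan_lead M := 32 * PI ^ 2 * atan (lead_log M).
Definition datan_lead M := 32 * PI ^ 2 / (M * (1 + lead_log M ^ 2)).

Lemma is_derive_atan_lead M : 0 < M -> is_derive atan_lead M (datan_lead M).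
Proof.
  intros HM. pose proof PI_RGT_0. unfold atan_lead, datan_lead, lead_log.
  auto_derive; [derive_side_conditions|]. rewrite ?lead_log_arg_eq.
  set (L := ln _). field. derive_side_conditions.
Qed.

Lemma continuous_datan_lead M : 0 < M -> continuous datan_lead M.
Proof.
  intros HM. apply (@ex_derive_continuous R_AbsRing R_NormedModule).
  pose proof PI_RGT_0. unfold datan_lead, lead_log. auto_derive. derive_side_conditions.
Qed.

Lemma Rabs_dphi_lead_le M : 0 < M -> Rabs (dphi_lead M) <= datan_lead M.
Proof.
  intros HM. pose proof PI_gt_3. unfold dphi_lead, datan_lead.
  set (L := lead_log M).
  assert (HL : Rabs L * Rabs L = L ^ 2) by (rewrite <- Rabs_mult, Rabs_right; nra).
  pose proof (Rabs_pos L). pose proof (pow2_ge_0 (Rabs L - 1 / 2)).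
  assert (Hratio : Rabs L * (1 + L ^ 2) / (L ^ 2 + PI ^ 2) ^ 2 <= 1).
  { apply Rmult_le_reg_r with ((L ^ 2 + PI ^ 2) ^ 2); [apply pow_lt; nra|].
    unfold Rdiv. rewrite Rmult_assoc, Rinv_l, Rmult_1_r, Rmult_1_l by (apply pow_nonzero; nra).
    replace ((L ^ 2 + PI ^ 2) ^ 2) with ((L ^ 2 + PI ^ 2) * (L ^ 2 + PI ^ 2)) by ring.
    apply Rmult_le_compat; nra. }
  replace (Rabs (32 * PI ^ 2 * L / (M * (L ^ 2 + PI ^ 2) ^ 2)))
    with (32 * PI ^ 2 / (M * (1 + L ^ 2)) * (Rabs L * (1 + L ^ 2) / (L ^ 2 + PI ^ 2) ^ 2)).
  - rewrite <- (Rmult_1_r (32 * PI ^ 2 / (M * (1 + L ^ 2)))) at 2.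
    apply Rmult_le_compat_l; [apply Rlt_le, Rdiv_lt_0_compat; nra | exact Hratio].
  - unfold Rdiv.
    rewrite !Rabs_mult, Rabs_inv, (Rabs_right 32), (Rabs_right (PI ^ 2)), (Rabs_right (M * _))
      by (apply Rle_ge; try apply Rmult_le_pos; try apply pow_le; nra).
    field. nra.
Qed.

Lemma Rabs_RInt_dphi_cos_le_atan t p A B : 0 < A -> A <= B ->
  Rabs (RInt (dphi_cos t p) A B) <= atan_lead B - atan_lead A.
Proof.
  intros HA HAB. apply Rabs_RInt_le_primitive with datan_lead; auto.
  - intros x Hx. apply continuous_dphi_cos. lra.
  - intros x Hx. unfold dphi_cos. rewrite Rabs_mult.
    rewrite <- (Rmult_1_r (datan_lead x)).
    apply Rmult_le_compat; try apply Rabs_pos;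
      [apply Rabs_dphi_lead_le; lra | apply Rabs_le, COS_bound].
  - intros x Hx. apply is_derive_atan_lead. lra.
  - intros x Hx. apply continuous_datan_lead. lra.
Qed.

Lemma Rabs_RInt_dphi_cos_le_phi t p A B : 0 < A -> A <= B -> 0 <= lead_log A ->
  Rabs (RInt (dphi_cos t p) A B) <= phi_lead m delta B - phi_lead m delta A.
Proof.
  intros HA HAB HLA. apply Rabs_RInt_le_primitive with dphi_lead; auto.
  - intros x Hx. apply continuous_dphi_cos. lra.
  - intros x Hx.
    assert (HLx : 0 <= lead_log x)
      by (apply Rle_trans with (lead_log A); [|apply lead_log_le]; lra).
    assert (Hd : 0 <= dphi_lead x).
    { pose proof PI_RGT_0. apply Rmult_le_pos; [nra | left; apply Rinv_0_lt_compat].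
      apply Rmult_lt_0_compat; [lra | apply pow_lt; nra]. }
    unfold dphi_cos. rewrite Rabs_mult, (Rabs_right (dphi_lead x)) by lra.
    rewrite <- (Rmult_1_r (dphi_lead x)) at 2.
    apply Rmult_le_compat_l; [lra | apply Rabs_le, COS_bound].
  - intros x Hx. apply is_derive_phi_lead. lra.
  - intros x Hx. apply continuous_dphi_lead. lra.
Qed.

Lemma Rabs_phi_cos_le t p M : Rabs (phi_cos t p M) <= Rabs (phi_lead m delta M).
Proof.
  unfold phi_cos. rewrite Rabs_mult. rewrite <- (Rmult_1_r (Rabs (phi_lead m delta M))) at 2.
  apply Rmult_le_compat_l; [apply Rabs_pos | apply Rabs_le, COS_bound].
Qed.

Lemma Rabs_phi_lead_le_antimono A B : 0 < A -> A <= B -> 0 <= lead_log A ->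
  Rabs (phi_lead m delta B) <= Rabs (phi_lead m delta A).
Proof.
  intros HA HAB HLA. rewrite !Rabs_phi_lead.
  apply lead_profile_le_antimono. split; [exact HLA | apply lead_log_le; auto].
Qed.

Lemma Rabs_RInt_C_integrand_le t p A B : 0 < t -> 0 < A -> A <= B ->
  Rabs (RInt (C_integrand m delta t p) A B) <= 2 / t * (32 + 32 * PI ^ 3).
Proof.
  intros Ht HA HAB. rewrite RInt_C_integrand_by_parts by lra.
  assert (Hphase : Rabs (RInt (dphi_cos t p) A B) <= 32 * PI ^ 3).
  { eapply Rle_trans; [apply Rabs_RInt_dphi_cos_le_atan; auto|].
    pose proof (atan_bound (lead_log A)). pose proof (atan_bound (lead_log B)).
    pose proof PI_gt_3. unfold atan_lead. nra. }
  pose proof (Rabs_phi_cos_le t p A). pose proof (Rabs_phi_cos_le t p B).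
  pose proof (Rabs_phi_lead_le_16 A). pose proof (Rabs_phi_lead_le_16 B).
  assert (0 < 2 / t) by (apply Rdiv_lt_0_compat; lra).
  eapply Rle_trans; [apply Rabs_triang|].
  rewrite !Rabs_mult, (Rabs_right (2 / t)), Rmult_plus_distr_l by lra.
  apply Rplus_le_compat; apply Rmult_le_compat_l; try lra.
  eapply Rle_trans; [apply Rabs_triang|]. rewrite Rabs_Ropp. lra.
Qed.

Lemma Rabs_RInt_C_integrand_tail_le t p A B : 0 < t -> 0 < A -> A <= B -> 0 <= lead_log A ->
  Rabs (RInt (C_integrand m delta t p) A B) <= 6 / t * Rabs (phi_lead m delta A).
Proof.
  intros Ht HA HAB HLA. rewrite RInt_C_integrand_by_parts by lra.
  pose proof (Rabs_RInt_dphi_cos_le_phi t p A B HA HAB HLA).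
  pose proof (Rabs_phi_cos_le t p A). pose proof (Rabs_phi_cos_le t p B).
  pose proof (Rabs_phi_lead_le_antimono A B HA HAB HLA).
  pose proof (phi_lead_eq A). pose proof (phi_lead_eq B).
  pose proof (lead_profile_pos (lead_log B)).
  rewrite (Rabs_phi_lead A) in *. rewrite (Rabs_phi_lead B) in *.
  assert (0 < 2 / t) by (apply Rdiv_lt_0_compat; lra).
  eapply Rle_trans; [apply Rabs_triang|].
  rewrite !Rabs_mult, (Rabs_right (2 / t)) by lra.
  replace (6 / t * lead_profile (lead_log A))
    with (2 / t * (2 * lead_profile (lead_log A)) + 2 / t * lead_profile (lead_log A))
    by (field; lra).
  apply Rplus_le_compat; apply Rmult_le_compat_l; try lra.
  eapply Rle_trans; [apply Rabs_triang|]. rewrite Rabs_Ropp. lra.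
Qed.

Lemma Rabs_RInt_C_integrand_le_omega t p A B : 0 < A -> A <= B ->
  Rabs (RInt (C_integrand m delta t p) A B) <= 32 * omega p B - 32 * omega p A.
Proof.
  intros HA HAB. pose proof (pnorm2_ge_0 p).
  apply (Rabs_RInt_le_primitive _ (fun x => 16 / omega p x) (fun x => 32 * omega p x)); auto.
  - intros x Hx. apply continuous_C_integrand. lra.
  - intros x Hx. pose proof (omega_pos p x ltac:(lra)). unfold C_integrand, Rdiv.
    rewrite !Rabs_mult, Rabs_inv, (Rabs_right (omega p x)) by lra.
    apply Rmult_le_compat_r; [left; apply Rinv_0_lt_compat; lra|].
    rewrite <- (Rmult_1_r 16). apply Rmult_le_compat; try apply Rabs_pos.
    + apply Rabs_phi_lead_le_16.
    + apply Rabs_le, SIN_bound.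
  - intros x Hx. pose proof (omega_pos p x ltac:(lra)). unfold omega in *.
    auto_derive; [lra|]. field. lra.
  - intros x Hx. apply (@ex_derive_continuous R_AbsRing R_NormedModule).
    pose proof (omega_pos p x ltac:(lra)). unfold omega in *. auto_derive. lra.
Qed.

Lemma phi_lead_eventually_small e : 0 < e -> exists R0, 4 * m ^ 2 <= R0 /\
  forall M, R0 <= M -> 0 <= lead_log M /\ Rabs (phi_lead m delta M) <= e.
Proof.
  intros He. pose proof PI_gt_3.
  set (Lam := 16 * PI ^ 2 / e).
  assert (HLam : 0 < Lam) by (apply Rdiv_lt_0_compat; nra).
  set (R1 := exp Lam * (4 * m ^ 2) / delta).
  assert (HR1 : 0 < R1)
    by (apply Rdiv_lt_0_compat; [apply Rmult_lt_0_compat; [apply exp_pos | nra] | lra]).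
  assert (HLR1 : lead_log R1 = Lam).
  { unfold lead_log, R1. rewrite <- (ln_exp Lam) at 2. f_equal. field. nra. }
  exists (Rmax (4 * m ^ 2) R1). split; [apply Rmax_l|]. intros M HM.
  pose proof (Rmax_r (4 * m ^ 2) R1).
  assert (HLM : Lam <= lead_log M) by (rewrite <- HLR1; apply lead_log_le; lra).
  split; [lra|]. rewrite Rabs_phi_lead.
  eapply Rle_trans; [apply lead_profile_le_inv; lra|].
  apply Rle_trans with (16 * PI ^ 2 / Lam).
  - apply Rmult_le_compat_l; [nra|]. apply Rinv_le_contravar; lra.
  - right. unfold Lam. field. lra.
Qed.

Lemma C_partial_sub t p u v : 4 * m ^ 2 <= u -> 0 < v ->
  C_partial m delta t p v - C_partial m delta t p u = RInt (C_integrand m delta t p) u v.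
Proof.
  intros Hu Hv. unfold C_partial. assert (0 < 4 * m ^ 2) by nra.
  rewrite <- (RInt_Chasles_R _ (4 * m ^ 2) u v); [ring|..];
    apply ex_RInt_continuous_pos; try lra; intros x Hx; apply continuous_C_integrand, Hx.
Qed.

Lemma ex_finite_lim_C_partial t p : 0 < t -> ex_finite_lim (C_partial m delta t p) p_infty.
Proof.
  intros Ht.
  destruct (proj1 (filterlim_locally_cauchy (T := R) (U := R_CompleteSpace)
     (F := Rbar_locally' p_infty) (C_partial m delta t p))) as [l Hl]; [|exists l; exact Hl].
  intros [eps Heps]. simpl.
  destruct (phi_lead_eventually_small (eps * t / 12)) as [R0 [HR0 Hsmall]].
  { apply Rdiv_lt_0_compat; nra. }
  assert (Hcauchy : forall u v, R0 <= u <= v ->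
    Rabs (C_partial m delta t p v - C_partial m delta t p u) <= eps / 2).
  { intros u v Huv. destruct (Hsmall u) as [HLu Hphi]; [lra|].
    rewrite C_partial_sub by nra.
    eapply Rle_trans; [apply Rabs_RInt_C_integrand_tail_le; auto; nra|].
    apply Rle_trans with (6 / t * (eps * t / 12)).
    - apply Rmult_le_compat_l; [apply Rlt_le, Rdiv_lt_0_compat|]; lra.
    - right. field. lra. }
  exists (fun u => R0 < u). split; [exists R0; auto|].
  intros u v Hu Hv. change (Rabs (C_partial m delta t p v - C_partial m delta t p u) < eps).
  destruct (Rle_lt_dec u v).
  - pose proof (Hcauchy u v ltac:(lra)). lra.
  - rewrite Rabs_minus_sym. pose proof (Hcauchy v u ltac:(lra)). lra.
Qed.

Lemma is_lim_C_partial t p : 0 < t ->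
  is_lim (C_partial m delta t p) p_infty (- C_fun m delta t p).
Proof.
  intros Ht. destruct (ex_finite_lim_C_partial t p Ht) as [l Hl].
  unfold C_fun. rewrite (is_lim_unique _ _ _ Hl). simpl. rewrite Ropp_involutive. exact Hl.
Qed.

Lemma Rabs_C_fun_add_C_partial_le t p A : 0 < t -> 4 * m ^ 2 <= A -> 0 <= lead_log A ->
  Rabs (C_fun m delta t p + C_partial m delta t p A) <= 6 / t * Rabs (phi_lead m delta A).
Proof.
  intros Ht HA HLA.
  rewrite <- Rabs_Ropp, Ropp_plus_distr.
  apply (is_lim_Rabs_sub_le (C_partial m delta t p)); [apply is_lim_C_partial, Ht|].
  exists A. intros v Hv. rewrite C_partial_sub by nra.
  apply Rabs_RInt_C_integrand_tail_le; auto; nra.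
Qed.

Lemma Rabs_C_fun_le t p : 0 < t -> Rabs (C_fun m delta t p) <= 2 * (32 + 32 * PI ^ 3) / t.
Proof.
  intros Ht. rewrite <- Rabs_Ropp, <- (Rminus_0_r (- C_fun m delta t p)).
  apply (is_lim_Rabs_sub_le (C_partial m delta t p)); [apply is_lim_C_partial, Ht|].
  exists (4 * m ^ 2). intros v Hv. rewrite Rminus_0_r. unfold C_partial.
  replace (2 * (32 + 32 * PI ^ 3) / t) with (2 / t * (32 + 32 * PI ^ 3)) by (field; lra).
  apply Rabs_RInt_C_integrand_le; nra.
Qed.

Definition C_majorant t := 32 / sqrt t + 6 / t * lead_profile (lead_log (/ t)).

Lemma Rabs_C_fun_le_majorant t p : 0 < t -> t <= delta / (4 * m ^ 2) ->
  Rabs (C_fun m delta t p) <= C_majorant t.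
Proof.
  (* Split at the M where omega has grown by 1 / sqrt t: before it, |integrand| <= 16 / omega
     integrates to 32 / sqrt t; after it, M >= 1 / t and the tail bound applies. *)
  intros Ht Htau. set (A0 := 4 * m ^ 2). assert (HA0 : 0 < A0) by (unfold A0; nra).
  assert (Hs : 0 < / sqrt t) by (apply Rinv_0_lt_compat, sqrt_lt_R0, Ht).
  destruct (omega_add_exists p A0 (/ sqrt t) HA0 Hs) as [M [HM Homega]].
  rewrite pow_inv, pow2_sqrt in HM by lra.
  pose proof (Rinv_0_lt_compat t Ht) as Htinv.
  assert (HLt : 0 <= lead_log (/ t)).
  { unfold lead_log. rewrite <- ln_1. apply ln_le; [lra|].
    apply Rmult_le_reg_l with t; [exact Ht|]. unfold A0 in Htau.
    replace (t * (/ t * delta / (4 * m ^ 2))) with (delta / (4 * m ^ 2)) by (field; split; nra).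
    lra. }
  assert (HLM : 0 <= lead_log M)
    by (apply Rle_trans with (lead_log (/ t)); [|apply lead_log_le]; auto; lra).
  replace (C_fun m delta t p)
    with ((C_fun m delta t p + C_partial m delta t p M) - C_partial m delta t p M) by ring.
  eapply Rle_trans; [apply Rabs_triang|]. rewrite Rabs_Ropp, Rplus_comm.
  unfold C_majorant. apply Rplus_le_compat.
  - unfold C_partial. fold A0.
    eapply Rle_trans; [apply Rabs_RInt_C_integrand_le_omega; lra|].
    right. rewrite Homega. unfold Rdiv. ring.
  - eapply Rle_trans; [apply Rabs_C_fun_add_C_partial_le; auto; unfold A0 in *; lra|].
    apply Rmult_le_compat_l; [apply Rlt_le, Rdiv_lt_0_compat; lra|].
    rewrite Rabs_phi_lead. apply lead_profile_le_antimono. split; auto.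
    apply lead_log_le; lra.
Qed.

Lemma Rabs_C_integrand_sub_le t t0 p M : 0 < M ->
  Rabs (C_integrand m delta t p M - C_integrand m delta t0 p M) <= 16 * Rabs (t - t0).
Proof.
  intros HM. pose proof (omega_pos p M HM). unfold C_integrand.
  replace (phi_lead m delta M * sin (omega p M * t) / omega p M -
           phi_lead m delta M * sin (omega p M * t0) / omega p M)
    with (phi_lead m delta M * ((sin (omega p M * t) - sin (omega p M * t0)) / omega p M))
    by (field; lra).
  rewrite Rabs_mult. apply Rmult_le_compat; try apply Rabs_pos; [apply Rabs_phi_lead_le_16|].
  unfold Rdiv. rewrite Rabs_mult, Rabs_inv, (Rabs_right (omega p M)) by lra.
  apply Rmult_le_reg_r with (omega p M); [lra|].
  rewrite Rmult_assoc, Rinv_l, Rmult_1_r by lra.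
  eapply Rle_trans; [apply Rabs_sin_sub_le|].
  rewrite <- Rmult_minus_distr_l, Rabs_mult, (Rabs_right (omega p M)) by lra.
  right. ring.
Qed.

Lemma Rabs_C_partial_sub_le t t0 p R1 : 4 * m ^ 2 <= R1 ->
  Rabs (C_partial m delta t p R1 - C_partial m delta t0 p R1)
  <= (R1 - 4 * m ^ 2) * (16 * Rabs (t - t0)).
Proof.
  intros HR1. assert (0 < 4 * m ^ 2) by nra. unfold C_partial.
  assert (Hex : forall s, ex_RInt (C_integrand m delta s p) (4 * m ^ 2) R1)
    by (intros s; apply ex_RInt_continuous_pos; try lra;
        intros x Hx; apply continuous_C_integrand, Hx).
  rewrite <- RInt_minus_R by apply Hex.
  apply abs_RInt_le_const; [exact HR1 | apply ex_RInt_minus_R; apply Hex |].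
  intros x Hx. apply Rabs_C_integrand_sub_le. lra.
Qed.

Lemma continuous_C_fun p t0 : 0 < t0 -> continuous (fun t => C_fun m delta t p) t0.
Proof.
  intros Ht0. apply filterlim_locally. intros [eps Heps]. simpl.
  destruct (phi_lead_eventually_small (eps * t0 / 48)) as [R1 [HR1 Hsmall]].
  { apply Rdiv_lt_0_compat; nra. }
  destruct (Hsmall R1 (Rle_refl R1)) as [HLR1 HphiR1].
  assert (Htail : forall t, t0 / 2 <= t ->
    Rabs (C_fun m delta t p + C_partial m delta t p R1) <= eps / 4).
  { intros t Ht. eapply Rle_trans; [apply Rabs_C_fun_add_C_partial_le; auto; lra|].
    apply Rle_trans with (6 / t * (eps * t0 / 48)).
    - apply Rmult_le_compat_l; [apply Rlt_le, Rdiv_lt_0_compat|]; lra.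
    - apply Rle_trans with (6 / t * (eps * (2 * t) / 48)).
      + apply Rmult_le_compat_l; [apply Rlt_le, Rdiv_lt_0_compat|]; nra.
      + right. field. lra. }
  set (D := Rmin (t0 / 2) (eps / 4 / (16 * (R1 - 4 * m ^ 2 + 1)))).
  assert (HD : 0 < D).
  { apply Rmin_pos; [lra|]. apply Rdiv_lt_0_compat; [lra|]. nra. }
  exists (mkposreal D HD). intros t Ht.
  change (Rabs (t - t0) < D) in Ht. change (Rabs (C_fun m delta t p - C_fun m delta t0 p) < eps).
  assert (HDt0 : D <= t0 / 2) by apply Rmin_l.
  assert (HDeps : D <= eps / 4 / (16 * (R1 - 4 * m ^ 2 + 1))) by apply Rmin_r.
  assert (Hlip : Rabs (C_partial m delta t p R1 - C_partial m delta t0 p R1) <= eps / 4).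
  { eapply Rle_trans; [apply Rabs_C_partial_sub_le, HR1|].
    apply Rle_trans with ((R1 - 4 * m ^ 2 + 1) * (16 * D)).
    - pose proof (Rabs_pos (t - t0)). apply Rmult_le_compat; lra.
    - apply (Rmult_le_compat_l (16 * (R1 - 4 * m ^ 2 + 1))) in HDeps; [|nra].
      replace (16 * (R1 - 4 * m ^ 2 + 1) * (eps / 4 / (16 * (R1 - 4 * m ^ 2 + 1))))
        with (eps / 4) in HDeps by (field; nra).
      lra. }
  apply Rabs_lt_between' in Ht.
  pose proof (Htail t ltac:(lra)). pose proof (Htail t0 ltac:(lra)).
  set (Pt := C_partial m delta t p R1) in *. set (Pt0 := C_partial m delta t0 p R1) in *.
  replace (C_fun m delta t p - C_fun m delta t0 p)
    with ((C_fun m delta t p + Pt) - (Pt - Pt0) - (C_fun m delta t0 p + Pt0)) by ring.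
  eapply Rle_lt_trans; [apply Rabs_triang|]. rewrite Rabs_Ropp.
  eapply Rle_lt_trans; [apply Rplus_le_compat_r, Rabs_triang|]. rewrite Rabs_Ropp.
  lra.
Qed.

Definition C_majorant_primitive t := 64 * sqrt t - 96 * PI * atan (lead_log (/ t) / PI).

Lemma is_derive_C_majorant_primitive t : 0 < t ->
  is_derive C_majorant_primitive t (C_majorant t).
Proof.
  intros Ht. pose proof PI_gt_3. pose proof (sqrt_lt_R0 t Ht).
  assert (Hsq : sqrt t * sqrt t = t) by (apply sqrt_sqrt; lra).
  unfold C_majorant_primitive, C_majorant, lead_profile, lead_log.
  auto_derive.
  - repeat split; try lra.
    apply Rdiv_lt_0_compat; [apply Rmult_lt_0_compat|]; [apply Rinv_0_lt_compat| |]; nra.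
  - rewrite ?lead_log_arg_eq. set (L := ln _). set (s := sqrt t) in *.
    field. repeat split; nra.
Qed.

Lemma continuous_C_majorant t : 0 < t -> continuous C_majorant t.
Proof.
  intros Ht. apply (@ex_derive_continuous R_AbsRing R_NormedModule).
  pose proof PI_gt_3. pose proof (sqrt_lt_R0 t Ht). unfold C_majorant, lead_profile, lead_log.
  auto_derive. repeat split; try nra.
  apply Rdiv_lt_0_compat; [apply Rmult_lt_0_compat|]; [apply Rinv_0_lt_compat| |]; nra.
Qed.

Lemma RInt_Rabs_C_fun_le p a : 0 < a <= delta / (4 * m ^ 2) ->
  RInt (fun t => Rabs (C_fun m delta t p)) a (delta / (4 * m ^ 2))
  <= C_majorant_primitive (delta / (4 * m ^ 2)) + 48 * PI ^ 2.
Proof.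
  intros Ha. set (tau := delta / (4 * m ^ 2)) in *.
  apply Rle_trans with (RInt C_majorant a tau).
  { apply RInt_le; [lra | | |].
    - apply ex_RInt_continuous_pos; try lra.
      intros t Ht. apply continuous_Rabs_comp, continuous_C_fun, Ht.
    - apply ex_RInt_continuous_pos; try lra. intros t Ht. apply continuous_C_majorant, Ht.
    - intros t Ht. apply Rabs_C_fun_le_majorant; unfold tau in *; lra. }
  rewrite (RInt_derive_R C_majorant_primitive); rewrite ?Rmin_left, ?Rmax_right by lra.
  - assert (- C_majorant_primitive a <= 48 * PI ^ 2); [|lra].
    unfold C_majorant_primitive. pose proof (atan_bound (lead_log (/ a) / PI)).
    pose proof PI_gt_3. pose proof (sqrt_pos a). nra.
  - intros t Ht. apply is_derive_C_majorant_primitive. lra.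
  - intros t Ht. apply continuous_C_majorant. lra.
Qed.

End LeadingTerm.

Theorem lemma4p12 (m delta : R) (Hm : 0 < m) (Hdelta : 0 < delta) :
  (forall (t : R) (p : R * R * R), 0 < t ->
     ex_finite_lim (C_partial m delta t p) p_infty) /\
  (exists C0 : R, 0 < C0 /\
     forall (t : R) (p : R * R * R), 0 < t -> Rabs (C_fun m delta t p) <= C0 / t) /\
  (exists tau : R, 0 < tau /\ exists K : R,
     forall p : R * R * R, exists I : R,
       is_RInt_gen (fun t => Rabs (C_fun m delta t p)) (at_right 0) (at_point tau) I
       /\ I <= K).
Proof.
  split; [|split].
  - intros t p Ht. apply ex_finite_lim_C_partial; assumption.
  - exists (2 * (32 + 32 * PI ^ 3)). split; [pose proof PI_gt_3; nra|].
    intros t p Ht. apply Rabs_C_fun_le; assumption.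
  - set (tau := delta / (4 * m ^ 2)).
    assert (Htau : 0 < tau) by (apply Rdiv_lt_0_compat; nra).
    exists tau. split; [exact Htau|].
    exists (C_majorant_primitive m delta tau + 48 * PI ^ 2). intros p.
    apply is_RInt_gen_at_right_le; [exact Htau | | |].
    + intros t Ht. apply ex_RInt_continuous_pos; try lra.
      intros s Hs. apply continuous_Rabs_comp, continuous_C_fun; assumption.
    + intros t Ht. apply Rabs_pos.
    + intros t Ht. apply RInt_Rabs_C_fun_le; assumption.
Qed.
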